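(* Assume $k$ is algebraically closed of characteristic $0$ and $\mathfrak C_R \not\subseteq \mathfrak m^2$. Then, for a suitable choice of uniformizing parameter $t$ of $\overline R = k[[t]]$, $R$ has Herzog–Kunz generators $x_1, \ldots, x_n$ (so $R = k[[x_1,\ldots,x_n]]$) with $x_1 = t^{a_1}$ and $x_n = t^{a_n}$, and the element $$\omega = a_n x_n\, dx_1 - a_1 x_1\, dx_n \in \widetilde{\Omega}^1_{R/k}$$ is a nonzero torsion element of $\widetilde{\Omega}^1_{R/k}$.
   Context: Let $k$ be an algebraically closed field and let $(R,\mathfrak m)$ be a complete local noetherian domain of dimension $1$ containing $k$ with $R/\mathfrak m = k$; its normalization is $\overline R = k[[t]]$ with $R \subseteq k[[t]]$ finite birational. Let $v$ be the $t$-adic valuation; for $A \subseteq k((t))$ let $v(A) = \{v(f): f\in A\setminus\{0\}\}$. The conductor is $\mathfrak C_R = \{x \in \overline R : x\overline R \subseteq R\} = t^{c_R}\overline R$. The Herzog–Kunz sequence of $R$ is $v(\mathfrak m)\setminus v(\mathfrak m^2)$ listed increasingly as $a_1 < \cdots < a_n$ ($n=\mathrm{edim}(R)$); Herzog–Kunz generators are $x_i\in R$ with $v(x_i)=a_i$, and they satisfy $R = k[[x_1,\ldots,x_n]]$. $\widetilde{\Omega}^1_{R/k}$ is the universally finite module of Kähler differentials of $R$ over $k$; for $R = k[[X_1,\ldots,X_n]]/P$ it is $\bigoplus_i R\,dX_i$ modulo the submodule generated by $\sum_i \frac{\partial F}{\partial X_i} dX_i$, $F \in P$, with $dx_i$ the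 class of $dX_i$. An element is torsion if it is annihilated by some nonzero element of $R$. *)

(* Formal power series over k are modelled concretely as
   coefficient functions nat -> k; multivariate power series in n variables
   as functions from exponent vectors {ffun 'I_n -> nat} to k. *)
From mathcomp Require Import all_boot all_algebra.
Set Implicit Arguments. Unset Strict Implicit. Unset Printing Implicit Defensive.
Import GRing.Theory.
Local Open Scope ring_scope.

Section PS.
Variable k : fieldType.

Definition ps := nat -> k.
Definition pzero : ps := fun _ => 0.
Definition pconst (c : k) : ps := fun m => if m == 0%N then c else 0.
Definition padd (f g : ps) : ps := fun m => f m + g m.
Definition popp (f : ps) : ps := fun m => - f m.
Definition pscale (c : k) (f : ps) : ps := fun m => c * f m.
Definition pmul (f g : ps) : ps := fun m => \sum_(i < m.+1) f i * g (m - i)%N.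
Definition ppow (f : ps) (e : nat) : ps := iter e (pmul f) (pconst 1).
Definition psum (N : nat) (F : nat -> ps) : ps := fun m => \sum_(j < N) F j m.

Definition vord (f : ps) (a : nat) : Prop :=
  f a != 0 /\ forall i, (i < a)%N -> f i = 0.

(* R is given as a subset S of k[[t]] *)
Definition subalgebra (S : ps -> Prop) : Prop :=
  (forall c, S (pconst c)) /\ (forall f g, S f -> S g -> S (padd f g)) /\
  (forall f, S f -> S (popp f)) /\ (forall f g, S f -> S g -> S (pmul f g)).

Definition max_ideal (S : ps -> Prop) (f : ps) : Prop := S f /\ f 0%N = 0.
Definition max_ideal2 (S : ps -> Prop) (f : ps) : Prop :=
  exists (N : nat) (g h : nat -> ps),
    (forall j, (j < N)%N -> max_ideal S (g j) /\ max_ideal S (h j)) /\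
    f = psum N (fun j => pmul (g j) (h j)).
Definition conductor (S : ps -> Prop) (f : ps) : Prop :=
  forall g : ps, S (pmul f g).

Definition val_m (S : ps -> Prop) (b : nat) : Prop :=
  exists f, max_ideal S f /\ vord f b.
Definition val_m2 (S : ps -> Prop) (b : nat) : Prop :=
  exists f, max_ideal2 S f /\ vord f b.
Definition HKset (S : ps -> Prop) (b : nat) : Prop := val_m S b /\ ~ val_m2 S b.

Definition mps (n : nat) := {ffun 'I_n -> nat} -> k.

Definition monoeval (n : nat) (al : {ffun 'I_n -> nat}) (x : nat -> ps) : ps :=
  \big[pmul/pconst 1]_(i < n) ppow (x (val i)) (al i).

(* substitution F(x_1,..,x_n), for x_i with x_i(0) = 0: coefficient of t^m is
   the (finite) sum over exponent vectors of total degree <= m; we sum over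
   all exponent vectors with entries <= m, the extra ones contribute 0. *)
Definition subst (n : nat) (F : mps n) (x : nat -> ps) : ps :=
  fun m => \sum_(al : {ffun 'I_n -> 'I_m.+1})
      F [ffun i => val (al i)] * monoeval [ffun i => val (al i)] x m.

Definition pderiv (n : nat) (i : 'I_n) (F : mps n) : mps n :=
  fun al => ((al i).+1)%:R * F [ffun j => (al j + (j == i))%N].

(* the submodule N of (+)_i R dX_i generated by the gradients (dF/dX_i(x))_i,
   F in the kernel P of k[[X]] -> R, X_i |-> x_i;
   Omega~^1_{R/k} = ((+)_i R dX_i) / N *)
Definition in_relations (S : ps -> Prop) (n : nat) (x : nat -> ps)
    (w : 'I_n -> ps) : Prop :=
  exists (N : nat) (r : nat -> ps) (F : nat -> mps n),
    (forall j, (j < N)%N -> S (r j) /\ subst (F j) x = pzero) /\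
    forall i : 'I_n, w i = psum N (fun j => pmul (r j) (subst (pderiv i (F j)) x)).

(* omega = a_n x_n dx_1 - a_1 x_1 dx_n, as an element of (+)_i R dX_i *)
Definition omega (n : nat) (a : nat -> nat) (x : nat -> ps) : 'I_n -> ps :=
  fun i => padd (if val i == 0%N then pscale (a n.-1)%:R (x n.-1) else pzero)
                (if val i == n.-1 then popp (pscale (a 0%N)%:R (x 0%N)) else pzero).

Definition vscale (n : nat) (r : ps) (w : 'I_n -> ps) : 'I_n -> ps :=
  fun i => pmul r (w i).

End PS.
Arguments omega {k} n a x _.

From HB Require Import structures.
From mathcomp Require Import all_boot all_algebra.
From mathcomp Require Import boolp ring zify.
From Stdlib Require Import Classical_Prop.
Set Implicit Arguments. Unset Strict Implicit. Unset Printing Implicit Defensive.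
Import GRing.Theory.
Local Open Scope ring_scope.

(* Choose y_1 in R of order a_1 and write y_1 = u^(a_1) for a new uniformizing
   parameter u (an a_1-th root in k[[t]], by Hensel's lemma: char k = 0 and k
   is algebraically closed).  Since the conductor is not contained in m^2, its
   generator is not in m^2, and decomposing it along the Herzog-Kunz
   generators shows that t^(a_n) k[[t]] lies in R, so u^(a_n) can serve as x_n.
   Then X_1^(a_n) - X_n^(a_1) is a relation, and its differential shows that
   x_1^(a_n - 1) omega lies in the relation module N: omega is torsion.
   Conversely, the x_i being independent modulo m^2, relations have no linear
   part, so modulo m^2 the coordinates of an element of N are the linear forms
   in the x_i given by a combination of Hessians of relations, a symmetric
   matrix.  For omega its (1,n) and (n,1) entries would be a_n and -a_1,
   impossible in characteristic 0.
   Indices are shifted: [x 0] and [x n.-1] are the paper's x_1 and x_n. *)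

Section PowerSeriesRing.
Variable k : fieldType.
Local Notation ps := (ps k).

(* Coefficients of a product below [N] only see the truncations at [N], so
   the ring axioms are inherited from [{poly k}]. *)
Definition ptrunc (N : nat) (f : ps) : {poly k} := \poly_(i < N) f i.

Lemma coef_ptrunc N f i : (i < N)%N -> (ptrunc N f)`_i = f i.
Proof. by move=> h; rewrite coef_poly h. Qed.

Lemma pmul_ptrunc N f g m : (m < N)%N -> pmul f g m = (ptrunc N f * ptrunc N g)`_m.
Proof.
move=> hm; rewrite coefM /pmul; apply: eq_bigr => i _.
rewrite !coef_ptrunc //; first exact: leq_ltn_trans (leq_subr _ _) hm.
exact: leq_trans (ltn_ord i) hm.
Qed.

Lemma pmulA : associative (@pmul k).
Proof.
move=> f g h; apply: funext => m.
have -> : pmul (pmul f g) h m = (ptrunc m.+1 f * ptrunc m.+1 g * ptrunc m.+1 h)`_m.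
  rewrite coefM {1}/pmul; apply: eq_bigr => i _.
  by rewrite (pmul_ptrunc _ _ (N := m.+1)) ?coef_ptrunc // ltnS leq_subr.
have -> : pmul f (pmul g h) m = (ptrunc m.+1 f * (ptrunc m.+1 g * ptrunc m.+1 h))`_m.
  rewrite coefM {1}/pmul; apply: eq_bigr => i _.
  by rewrite (pmul_ptrunc _ _ (N := m.+1)) ?coef_ptrunc // ltnS leq_subr.
by rewrite mulrA.
Qed.

Lemma pmulC : commutative (@pmul k).
Proof. by move=> f g; apply: funext => m; rewrite !(pmul_ptrunc _ _ (ltnSn m)) mulrC. Qed.

Lemma pmul1 : left_id (pconst 1) (@pmul k).
Proof.
move=> f; apply: funext => m; rewrite (pmul_ptrunc _ _ (ltnSn m)).
have -> : ptrunc m.+1 (pconst 1) = 1.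
  by apply/polyP => -[|i]; rewrite coef_poly coef1 /pconst //= if_same.
by rewrite mul1r coef_ptrunc.
Qed.

Lemma pmulDl : left_distributive (@pmul k) (@padd k).
Proof.
move=> f g h; apply: funext => m; rewrite /padd /pmul -big_split /=.
by apply: eq_bigr => i _; rewrite mulrDl.
Qed.

Lemma paddA : associative (@padd k).
Proof. by move=> f g h; apply: funext => m; rewrite /padd addrA. Qed.
Lemma paddC : commutative (@padd k).
Proof. by move=> f g; apply: funext => m; rewrite /padd addrC. Qed.
Lemma padd0 : left_id (@pzero k) (@padd k).
Proof. by move=> f; apply: funext => m; rewrite /padd /pzero add0r. Qed.
Lemma paddN : left_inverse (@pzero k) (@popp k) (@padd k).
Proof. by move=> f; apply: funext => m; rewrite /padd /popp /pzero addNr. Qed.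

Lemma pconst1_neq0 : pconst 1 != pzero k.
Proof. by apply/eqP => /(congr1 (fun f => f 0%N)) /eqP; rewrite oner_eq0. Qed.

HB.instance Definition _ := gen_eqMixin ps.
HB.instance Definition _ := gen_choiceMixin ps.
HB.instance Definition _ := GRing.isZmodule.Build ps paddA paddC padd0 paddN.
HB.instance Definition _ :=
  GRing.Zmodule_isComNzRing.Build ps pmulA pmulC pmul1 pmulDl pconst1_neq0.

Lemma pcoefD (f g : ps) m : (f + g) m = f m + g m. Proof. by []. Qed.
Lemma pcoefN (f : ps) m : (- f) m = - f m. Proof. by []. Qed.
Lemma pcoefB (f g : ps) m : (f - g) m = f m - g m. Proof. by []. Qed.
Lemma pcoefM (f g : ps) m : (f * g) m = \sum_(i < m.+1) f i * g (m - i)%N.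
Proof. by []. Qed.
Lemma pcoefM0 (f g : ps) : (f * g) 0%N = f 0%N * g 0%N.
Proof. by rewrite pcoefM big_ord1. Qed.
Lemma pcoef10 : (1 : ps) 0%N = 1. Proof. by []. Qed.
Lemma pcoefX0 (f : ps) e : (f ^+ e) 0%N = f 0%N ^+ e.
Proof. by elim: e => [|e IH]; rewrite ?expr0 // !exprS pcoefM0 IH. Qed.

Lemma pcoef_sum (I : Type) (r : seq I) (P : pred I) (F : I -> ps) m :
  (\sum_(i <- r | P i) F i) m = \sum_(i <- r | P i) F i m.
Proof.
elim: r => [|a r IH]; rewrite ?big_nil ?big_cons //.
by case: (P a); rewrite // pcoefD IH.
Qed.

Lemma pcoefCM (c : k) (f : ps) m : (pconst c * f) m = c * f m.
Proof.
rewrite pcoefM big_ord_recl big1 ?addr0 ?subn0 // => i _.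
by rewrite /pconst /= mul0r.
Qed.

Lemma pconstD (a b : k) : pconst (a + b) = pconst a + pconst b :> ps.
Proof. by apply: funext => m; rewrite pcoefD /pconst; case: (m == 0)%N; rewrite ?addr0. Qed.
Lemma pconstM (a b : k) : pconst (a * b) = pconst a * pconst b :> ps.
Proof. by apply: funext => m; rewrite pcoefCM /pconst; case: (m == 0)%N; rewrite ?mulr0. Qed.
Lemma pconstN (a : k) : pconst (- a) = - pconst a :> ps.
Proof. by apply: funext => m; rewrite pcoefN /pconst; case: (m == 0)%N; rewrite ?oppr0. Qed.
Lemma pconst0 : pconst 0 = 0 :> ps.
Proof. by apply: funext => m; rewrite /pconst; case: (m == 0)%N. Qed.
Lemma pconst1 : pconst 1 = 1 :> ps. Proof. by []. Qed.
Lemma pconst_sum (I : Type) (r : seq I) (P : pred I) (F : I -> k) :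
  pconst (\sum_(i <- r | P i) F i) = \sum_(i <- r | P i) pconst (F i) :> ps.
Proof.
elim: r => [|a r IH]; rewrite ?big_nil ?pconst0 // !big_cons.
by case: (P a); rewrite // pconstD IH.
Qed.

Lemma psumE N (F : nat -> ps) : psum N F = \sum_(j < N) F j.
Proof. by apply: funext => m; rewrite pcoef_sum. Qed.
Lemma ppowE (f : ps) e : ppow f e = f ^+ e.
Proof. by elim: e => [|e IH] //=; rewrite exprS -IH. Qed.
Lemma pscaleE c (f : ps) : pscale c f = pconst c * f.
Proof. by apply: funext => m; rewrite pcoefCM. Qed.

End PowerSeriesRing.

Section Order.
Variable k : fieldType.
Local Notation ps := (ps k).

Definition tdvd (p : nat) (f : ps) := forall i, (i < p)%N -> f i = 0.
Definition tpow (p : nat) : ps := fun m => (m == p)%:R.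
Definition tshift (p : nat) (f : ps) : ps := fun m => f (m + p)%N.

Lemma tdvdW p q f : (q <= p)%N -> tdvd p f -> tdvd q f.
Proof. by move=> hqp h i hi; apply: h; apply: leq_trans hqp. Qed.
Lemma tdvd0 p : tdvd p 0. Proof. by []. Qed.
Lemma tdvd0n f : tdvd 0 f. Proof. by []. Qed.
Lemma tdvdD p f g : tdvd p f -> tdvd p g -> tdvd p (f + g).
Proof. by move=> hf hg i hi; rewrite pcoefD hf ?hg ?addr0. Qed.
Lemma tdvdN p f : tdvd p f -> tdvd p (- f).
Proof. by move=> hf i hi; rewrite pcoefN hf ?oppr0. Qed.
Lemma tdvdB p f g : tdvd p f -> tdvd p g -> tdvd p (f - g).
Proof. by move=> hf hg; apply: tdvdD => //; apply: tdvdN. Qed.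
Lemma tdvd_sum p (I : Type) (r : seq I) (P : pred I) (F : I -> ps) :
  (forall i, P i -> tdvd p (F i)) -> tdvd p (\sum_(i <- r | P i) F i).
Proof. by move=> h; apply: big_ind => //; apply: tdvdD. Qed.
Lemma tdvdM p q f g : tdvd p f -> tdvd q g -> tdvd (p + q)%N (f * g).
Proof.
move=> hf hg m hm; rewrite pcoefM big1 // => i _.
case: (ltnP i p) => hip; first by rewrite hf ?mul0r.
by rewrite hg ?mulr0 //; have := ltn_ord i; lia.
Qed.
Lemma tdvdMr p f g : tdvd p f -> tdvd p (f * g).
Proof. by move=> hf; rewrite -[p]addn0; apply: tdvdM. Qed.
Lemma tdvdMl p f g : tdvd p g -> tdvd p (f * g).
Proof. by move=> hg; rewrite mulrC; apply: tdvdMr. Qed.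
Lemma tdvdX p f e : tdvd p f -> tdvd (p * e) (f ^+ e).
Proof.
move=> hf; elim: e => [|e IH]; first by rewrite muln0.
by rewrite exprS mulnS; apply: tdvdM.
Qed.

Lemma pcoef_tdvdM m (f g : ps) : tdvd m f -> (f * g) m = f m * g 0%N.
Proof.
move=> hf; rewrite pcoefM big_ord_recr /= subnn big1 ?add0r // => i _.
by rewrite hf ?mul0r.
Qed.

Lemma pcoef_tpowM p (g : ps) m :
  (tpow p * g) m = if (p <= m)%N then g (m - p)%N else 0.
Proof.
rewrite pcoefM; case: ifP => hpm.
  rewrite (bigD1 (@Ordinal m.+1 p hpm)) //= /tpow eqxx mul1r big1 ?addr0 // => i hi.
  have /negbTE -> : val i != p by apply: contra hi => /eqP h; apply/eqP/val_inj.
  by rewrite mul0r.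
rewrite big1 // => i _; rewrite /tpow.
have /negbTE -> : val i != p by apply/eqP => hip; move: hpm; rewrite -hip -ltnS ltn_ord.
by rewrite mul0r.
Qed.

Lemma tshiftK p f : tdvd p f -> f = tpow p * tshift p f.
Proof.
move=> hf; apply: funext => m; rewrite pcoef_tpowM; case: ifP => hpm.
  by rewrite /tshift subnK.
by rewrite hf // ltnNge hpm.
Qed.

Lemma tdvd_tshift p q f : tdvd (p + q)%N f -> tdvd q (tshift p f).
Proof. by move=> hf i hi; rewrite /tshift hf // addnC ltn_add2l. Qed.

Lemma tdvd_tpow p : tdvd p (tpow p).
Proof. by move=> i hi; rewrite /tpow ltn_eqF. Qed.

Lemma tpowD p q : tpow p * tpow q = tpow (p + q)%N.
Proof.
apply: funext => m; rewrite pcoef_tpowM /tpow; case: ifP => hpm.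
  by rewrite -(eqn_add2r p) subnK // addnC.
by case: eqP => // h; move: hpm; rewrite h leq_addr.
Qed.

Lemma tpowX e : tpow 1 ^+ e = tpow e.
Proof.
elim: e => [|e IH]; last by rewrite exprS IH tpowD add1n.
by apply: funext => -[|m].
Qed.

Lemma vord_tdvd (f : ps) p : vord f p -> tdvd p f. Proof. by case. Qed.

Lemma vord_neq0 (f : ps) p : vord f p -> f <> 0.
Proof. by case=> /eqP h _ hf; apply: h; rewrite hf. Qed.

Lemma vord_exists (f : ps) : f <> 0 -> exists p, vord f p.
Proof.
move=> hf.
have ex : exists p, f p != 0.
  apply: contra_notP hf => h; apply: funext => m.
  by apply/eqP; apply: contra_notT h => hm; exists m.
exists (ex_minn ex); case: ex_minnP => p hp hmin; split => // i hip.
by apply/eqP; apply: contraTT hip => hi; rewrite -leqNgt hmin.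
Qed.

Lemma not_tdvd_vord (f : ps) b : ~ tdvd b f -> exists2 p, (p < b)%N & vord f p.
Proof.
move=> h.
have [|p hp] := @vord_exists f; first by move=> hf; apply: h; rewrite hf.
exists p => //; rewrite ltnNge; apply/negP => hbp; apply: h.
exact: tdvdW hbp (vord_tdvd hp).
Qed.

Lemma vordM (f g : ps) p q : vord f p -> vord g q -> vord (f * g) (p + q)%N.
Proof.
move=> [hp0 hp] [hq0 hq]; split; last exact: tdvdM.
rewrite (tshiftK hp) (tshiftK hq) mulrACA tpowD pcoef_tpowM leqnn subnn pcoefM0.
by rewrite /tshift !add0n mulf_neq0.
Qed.

Lemma vordX (f : ps) p e : vord f p -> vord (f ^+ e) (p * e).
Proof.
move=> hf; elim: e => [|e IH]; last by rewrite exprS mulnS; apply: vordM.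
by rewrite muln0 expr0; split => //; rewrite pcoef10 oner_neq0.
Qed.

Lemma tdvd_cancel_lead p (f y : ps) : vord y p -> tdvd p f ->
  tdvd p.+1 (f - pconst (f p / y p) * y).
Proof.
move=> [hy0 hy] hf j; rewrite ltnS leq_eqVlt pcoefB pcoefCM => /orP [/eqP ->|hj].
  by rewrite divfK // subrr.
by rewrite (hf j hj) (hy j hj) mulr0 subr0.
Qed.

Lemma vord_tpow p : vord (tpow p : ps) p.
Proof. by split; [rewrite /tpow eqxx oner_neq0 | exact: tdvd_tpow]. Qed.

End Order.
Arguments tpow {k} p.
Arguments tshift {k} p f.

(* Hensel lifting: once w_0, ..., w_(m-1) are fixed, the m-th coefficient of
   [Phi w] is affine in w_m with slope [lam], so [Phi w = z] is solved
   coefficient by coefficient. *)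
Section Newton.
Variable k : fieldType.
Local Notation ps := (ps k).
Variables (Phi : ps -> ps) (z : ps) (w0 lam : k).
Hypothesis lam_neq0 : lam != 0.
Hypothesis Phi_coef0 : forall w : ps, w 0%N = w0 -> Phi w 0%N = z 0%N.
Hypothesis Phi_coef_lin : forall (w w' : ps) m, (0 < m)%N -> w 0%N = w0 -> w' 0%N = w0 ->
  (forall i, (i < m)%N -> w i = w' i) -> Phi w m - Phi w' m = lam * (w m - w' m).

Fixpoint newton_approx (m : nat) : ps :=
  if m is m'.+1 then
    let V := newton_approx m' in
    fun i => V i + (if i == m'.+1 then (z m'.+1 - Phi V m'.+1) / lam else 0)
  else pconst w0.

Local Notation W := newton_approx.

Lemma newton_approx0 m : W m 0%N = w0.
Proof. by elim: m => [|m IH] //=; rewrite IH addr0. Qed.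

Lemma newton_approxS m i : (i <= m)%N -> W m.+1 i = W m i.
Proof. by move=> him /=; rewrite ltn_eqF ?addr0. Qed.

Lemma newton_approx_stable m m' i : (i <= m)%N -> (m <= m')%N -> W m' i = W m i.
Proof.
move=> him; elim: m' => [|m' IH]; first by rewrite leqn0 => /eqP ->.
rewrite leq_eqVlt => /orP [/eqP <- //|]; rewrite ltnS => hm.
by rewrite newton_approxS ?IH //; apply: leq_trans hm.
Qed.

Lemma newton_approxP m i : (i <= m)%N -> Phi (W m) i = z i.
Proof.
elim: m i => [|m IH] [|i] hi; rewrite ?Phi_coef0 ?newton_approx0 //.
have hd := Phi_coef_lin (ltn0Sn i) (newton_approx0 m.+1) (newton_approx0 m).
case: (ltnP i m) => him.
  have -> : Phi (W m.+1) i.+1 = Phi (W m) i.+1.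
    apply/eqP; rewrite -subr_eq0 hd ?newton_approxS ?subrr ?mulr0 // => j hj.
    by rewrite newton_approxS //; apply: leq_trans (ltnW hj) _.
  exact: IH.
have eq_im : i = m by apply/eqP; rewrite eqn_leq him andbT -ltnS.
subst i.
move: hd => /(_ (fun j hj => @newton_approxS m j hj)).
rewrite /= eqxx [W m m.+1 + _]addrC addrK [lam * _]mulrC divfK //.
by move=> /(congr1 (fun t => t + Phi (W m) m.+1)); rewrite !subrK.
Qed.

Lemma newton : exists w : ps, w 0%N = w0 /\ Phi w = z.
Proof.
pose wlim : ps := fun j => W j j.
have wlimE m i : (i <= m)%N -> wlim i = W m i.
  by move=> him; rewrite /wlim (newton_approx_stable (leqnn i) him).
exists wlim; split; first by rewrite /wlim newton_approx0.
apply: funext => -[|m]; first by apply: Phi_coef0; rewrite /wlim newton_approx0.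
have := Phi_coef_lin (w := wlim) (ltn0Sn m) (newton_approx0 0) (newton_approx0 m.+1)
  (fun j hj => wlimE _ _ (ltnW hj)).
rewrite (wlimE _ _ (leqnn _)) subrr mulr0 => /eqP; rewrite subr_eq0 => /eqP ->.
exact: newton_approxP.
Qed.

End Newton.

Section Inverse.
Variable k : fieldType.
Local Notation ps := (ps k).

Lemma ps_unit (c : ps) : c 0%N != 0 -> exists e : ps, c * e = 1.
Proof.
move=> hc.
have [||w [_ hw]] := @newton _ (fun w => c * w) 1 (c 0%N)^-1 (c 0%N) hc.
- by move=> w hw; rewrite pcoefM0 hw divff.
- move=> w w' m hm _ _ hww'.
  rewrite -pcoefB -mulrBr [c * _]mulrC pcoef_tdvdM ?pcoefB 1?mulrC // => i hi.
  by rewrite pcoefB hww' // subrr.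
by exists w.
Qed.

Lemma vord_dvd (d h : ps) p : vord d p -> tdvd p h -> exists g : ps, h = d * g.
Proof.
move=> [hd0 hd] hh.
have [e he] : exists e : ps, tshift p d * e = 1 by apply: ps_unit; rewrite /tshift add0n.
exists (e * tshift p h); rewrite {1}(tshiftK hd) {1}(tshiftK hh).
transitivity (tpow p * ((tshift p d * e) * tshift p h)); first by rewrite he mul1r.
ring.
Qed.

End Inverse.

Section Root.
Variable k : closedFieldType.
Hypothesis char0 : [pchar k] =i pred0.
Local Notation ps := (ps k).

Lemma natf_neq0_char0 (a : nat) : (0 < a)%N -> a%:R != 0 :> k.
Proof. by move=> ha; apply/negP => /(natf0_pchar ha) [p]; rewrite char0. Qed.

Lemma ps_root (z : ps) (a : nat) : (0 < a)%N -> z 0%N != 0 ->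
  exists w : ps, w 0%N != 0 /\ w ^+ a = z.
Proof.
move=> ha hz.
have [w0 hw0] : exists w0 : k, w0 ^+ a = z 0%N.
  have [x hx] := @solve_monicpoly k a (fun i => if i == 0%N then z 0%N else 0) ha.
  exists x; rewrite hx (bigD1 (Ordinal ha)) //= expr0 mulr1 big1 ?addr0 // => i hi.
  have /negbTE -> : val i != 0%N by apply: contra hi => /eqP h; apply/eqP/val_inj.
  by rewrite mul0r.
have w0n : w0 != 0 by apply: contraNneq hz => h; rewrite -hw0 h expr0n gtn_eqF.
have hlam : a%:R * w0 ^+ a.-1 != 0 by rewrite mulf_neq0 ?natf_neq0_char0 ?expf_neq0.
have [||w [hw0' hw]] := @newton _ (fun w => w ^+ a) z w0 _ hlam.
- by move=> w hw; rewrite pcoefX0 hw hw0.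
- move=> w w' m hm h0 h0' hww'.
  rewrite -pcoefB subrXX pcoef_tdvdM => [|i hi]; last by rewrite pcoefB hww' // subrr.
  rewrite pcoefB mulrC pcoef_sum (eq_bigr (fun _ => w0 ^+ a.-1)).
    by rewrite sumr_const card_ord mulr_natl.
  move=> i _; rewrite pcoefM0 !pcoefX0 h0 h0' -exprD subnK //.
  by rewrite -ltnS prednK.
by exists w; rewrite hw0'.
Qed.

Lemma uniformizer_root (y : ps) p : (0 < p)%N -> vord y p ->
  exists u : ps, vord u 1 /\ u ^+ p = y.
Proof.
move=> hp hy.
have [|w [hw0 hw]] := @ps_root (tshift p y) p hp; first by rewrite /tshift add0n; case: hy.
exists (tpow 1 * w); split.
  by rewrite -[1%N]addn0; apply: vordM (vord_tpow k 1) _; split.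
by rewrite exprMn tpowX hw -tshiftK //; exact: vord_tdvd hy.
Qed.

End Root.

Section Monomials.
Variable k : fieldType.
Variable n : nat.
Variable x : nat -> ps k.
Local Notation ps := (ps k).
Local Notation exps := {ffun 'I_n -> nat}.
Local Notation mono al := (monoeval al x).

Definition mdeg (al : exps) : nat := (\sum_(i < n) al i)%N.
Definition ffval L (b : {ffun 'I_n -> 'I_L}) : exps := [ffun i => val (b i)].
Definition mmono (be : exps) : mps k n := fun al => (al == be)%:R.
Definition eunit (i : 'I_n) : exps := [ffun j => nat_of_bool (j == i)].
Definition ezero : exps := [ffun _ => 0%N].
Definition eadd (al be : exps) : exps := [ffun i => (al i + be i)%N].
Definition esub1 (al : exps) (i : 'I_n) : exps := [ffun j => (al j - (j == i))%N].

Lemma mmono_eq (al : exps) : mmono al al = 1. Proof. by rewrite /mmono eqxx. Qed.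
Lemma mmono_neq (al be : exps) : be != al -> mmono al be = 0.
Proof. by move/negbTE; rewrite /mmono => ->. Qed.

Lemma eunit_inj : injective eunit.
Proof. by move=> i j /(congr1 (fun f : exps => f i)); rewrite !ffunE eqxx; case: eqP. Qed.
Lemma eunit_neq0 i : eunit i != ezero.
Proof. by apply/eqP => /(congr1 (fun f : exps => f i)); rewrite !ffunE eqxx. Qed.

Lemma leq_mdeg (al : exps) i : (al i <= mdeg al)%N.
Proof. by rewrite /mdeg (bigD1 i) //= leq_addr. Qed.
Lemma mdeg_eadd (al be : exps) : mdeg (eadd al be) = (mdeg al + mdeg be)%N.
Proof. by rewrite /mdeg -big_split /=; apply: eq_bigr => i _; rewrite ffunE. Qed.
Lemma mdeg_eunit (i : 'I_n) : mdeg (eunit i) = 1%N.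
Proof.
rewrite /mdeg (bigD1 i) //= ffunE eqxx big1 // => j hj.
by rewrite ffunE (negbTE hj).
Qed.

Lemma mdeg_eq0 (al : exps) : mdeg al = 0%N -> al = ezero.
Proof.
move=> h; apply/ffunP => i; rewrite ffunE; apply/eqP; rewrite -leqn0 -h.
exact: leq_mdeg.
Qed.

Lemma mdeg_gt0 (al : exps) : (0 < mdeg al)%N -> exists i, (0 < al i)%N.
Proof.
move=> h; apply: NNPP => hn; move: h; rewrite /mdeg big1 // => i _.
by apply/eqP; rewrite -leqn0 leqNgt; apply/negP => hi; apply: hn; exists i.
Qed.

Lemma mdeg_eq1 (al : exps) : mdeg al = 1%N -> exists i, al = eunit i.
Proof.
move=> h; have [|i hi] := @mdeg_gt0 al; first by rewrite h.
exists i; apply/ffunP => j; rewrite ffunE.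
case: (eqVneq j i) => [->|hji] /=.
  by have := leq_mdeg al i; rewrite h; move: hi; case: (al i) => [|[]].
have : (al i + al j <= mdeg al)%N.
  by rewrite /mdeg (bigD1 i) //= leq_add2l (bigD1 j) //= leq_addr.
by rewrite h; lia.
Qed.

Lemma eadd_eunit_esub1 (al : exps) i : (0 < al i)%N -> eadd (eunit i) (esub1 al i) = al.
Proof.
move=> h; apply/ffunP => j; rewrite !ffunE.
by case: (eqVneq j i) => [->|hji] /=; [rewrite add1n subn1 prednK | rewrite add0n subn0].
Qed.

Lemma monoE (al : exps) : mono al = \prod_(i < n) x i ^+ al i.
Proof. by apply: eq_bigr => i _; rewrite ppowE. Qed.

Lemma mono_eadd (al be : exps) : mono (eadd al be) = mono al * mono be.
Proof. by rewrite !monoE -big_split /=; apply: eq_bigr => i _; rewrite ffunE exprD. Qed.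

Lemma mono_ezero : mono ezero = 1.
Proof. by rewrite monoE big1 // => i _; rewrite ffunE expr0. Qed.

Lemma mono_single (i : 'I_n) e : mono [ffun j => if j == i then e else 0%N] = x i ^+ e.
Proof.
rewrite monoE (bigD1 i) //= ffunE eqxx big1 ?mulr1 // => j hj.
by rewrite ffunE (negbTE hj) expr0.
Qed.

Lemma mono_eunit i : mono (eunit i) = x i.
Proof.
by rewrite -[x i]expr1 -mono_single; congr monoeval; apply/ffunP => j; rewrite !ffunE.
Qed.

Lemma tdvd_mono (p : 'I_n -> nat) (al : exps) : (forall i : 'I_n, tdvd (p i) (x i)) ->
  tdvd (\sum_(i < n) al i * p i)%N (mono al).
Proof.
move=> hx; rewrite monoE.
apply: (big_ind2 (fun (q : nat) (f : ps) => tdvd q f)) => //.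
  by move=> q1 f1 q2 f2; apply: tdvdM.
by move=> i _; rewrite mulnC; apply: tdvdX.
Qed.

(* computes the partial derivatives of a pure power X_i0^e *)
Lemma eq_shift_single (i i0 : 'I_n) e (al : exps) : (0 < e)%N ->
  ([ffun m => (al m + (m == i))%N] == [ffun j => if j == i0 then e else 0%N])
  = (i == i0) && (al == [ffun j => if j == i0 then e.-1 else 0%N]).
Proof.
move=> he; apply/eqP/andP => [E|[/eqP <- /eqP ->]].
  have hi0 : i = i0.
    by have := congr1 (fun f : exps => f i) E; rewrite !ffunE eqxx addn1; case: eqP.
  subst i0; split => //; apply/eqP/ffunP => j.
  have := congr1 (fun f : exps => f j) E; rewrite !ffunE.
  by case: eqP => _ /=; [rewrite addn1 => <- | rewrite addn0].
by apply/ffunP => j; rewrite !ffunE; case: eqP => _ /=; [rewrite addn1 prednK | rewrite addn0].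
Qed.

Lemma sum_box_ffval (V : zmodType) L (G : exps -> V) be :
  \sum_(b : {ffun 'I_n -> 'I_L}) (if ffval b == be then G (ffval b) else 0)
  = if [forall i, (be i < L)%N] then G be else 0.
Proof.
case: forallP => hb.
  pose b0 : {ffun 'I_n -> 'I_L} := [ffun i => Ordinal (hb i)].
  have hvb0 : ffval b0 = be by apply/ffunP => i; rewrite !ffunE.
  rewrite (bigD1 b0) //= hvb0 eqxx big1 ?addr0 // => b hb0.
  case: eqP => // hv; exfalso; move/eqP: hb0; apply.
  apply/ffunP => i; apply: val_inj; rewrite !ffunE /=.
  by have := congr1 (fun f : exps => f i) hv; rewrite /ffval !ffunE.
rewrite big1 // => b _; case: eqP => // hv; exfalso; apply: hb => i.
by rewrite -hv /ffval ffunE ltn_ord.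
Qed.

Lemma substD (F G : mps k n) : subst (fun al => F al + G al) x = subst F x + subst G x.
Proof.
apply: funext => m; rewrite pcoefD /subst -big_split /=.
by apply: eq_bigr => b _; rewrite mulrDl.
Qed.

Lemma substZ c (F : mps k n) : subst (fun al => c * F al) x = pconst c * subst F x.
Proof.
apply: funext => m; rewrite pcoefCM /subst mulr_sumr.
by apply: eq_bigr => b _; rewrite mulrA.
Qed.

Lemma subst0 : subst (fun _ : exps => 0) x = 0.
Proof. by apply: funext => m; rewrite /subst big1 // => b _; rewrite mul0r. Qed.

Lemma substB (F G : mps k n) : subst (fun al => F al - G al) x = subst F x - subst G x.
Proof.
have -> : subst G x = - subst (fun al => - G al) x.
  rewrite -mulN1r -pconst1 -pconstN -substZ; congr subst.
  by apply: funext => al; rewrite mulN1r opprK.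
by rewrite opprK -substD.
Qed.

Lemma subst_sum (I : Type) (r : seq I) (F : I -> mps k n) :
  subst (fun al => \sum_(j <- r) F j al) x = \sum_(j <- r) subst (F j) x.
Proof.
elim: r => [|j r IH]; last first.
  by rewrite big_cons -IH -substD; congr subst; apply: funext => al; rewrite big_cons.
by rewrite big_nil -subst0; congr subst; apply: funext => al; rewrite big_nil.
Qed.

Hypothesis x_tdvd1 : forall i : 'I_n, tdvd 1 (x i).

Lemma tdvd_mono_mdeg (al : exps) : tdvd (mdeg al) (mono al).
Proof.
have := tdvd_mono (al := al) x_tdvd1.
by rewrite /mdeg (eq_bigr (fun i => al i)) // => i _; rewrite muln1.
Qed.

Lemma subst_mmono (be : exps) : subst (mmono be) x = mono be.
Proof.
apply: funext => m; rewrite /subst.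
rewrite (eq_bigr (fun b => if ffval b == be then monoeval (ffval b) x m else 0)); last first.
  by move=> b _; rewrite /mmono; case: eqP => _; rewrite ?mul1r ?mul0r.
rewrite (sum_box_ffval _ (fun al => monoeval al x m)); case: forallP => // hb.
have [i hi] : exists i, ~~ (be i < m.+1)%N.
  by apply/existsP; rewrite -negb_forall; apply/forallP.
by symmetry; apply: tdvd_mono_mdeg; apply: leq_trans (leq_mdeg be i); rewrite leqNgt.
Qed.

Lemma tdvd_subst D (F : mps k n) : (forall al : exps, F al != 0 -> (D <= mdeg al)%N) ->
  tdvd D (subst F x).
Proof.
move=> hF m hm; rewrite /subst big1 // => b _.
case: (eqVneq (F (ffval b)) 0) => [->|hnz]; first by rewrite mul0r.
by rewrite tdvd_mono_mdeg ?mulr0 //; apply: leq_trans hm (hF _ hnz).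
Qed.

Lemma subst_box_split B (F : mps k n) : exists G : mps k n,
  (forall al, G al != 0 -> (B <= mdeg al)%N) /\
  subst F x = \sum_(b : {ffun 'I_n -> 'I_B}) pconst (F (ffval b)) * mono (ffval b) + subst G x.
Proof.
pose inbox (al : exps) := [forall i, (al i < B)%N].
exists (fun al => if inbox al then 0 else F al); split.
  move=> al; rewrite /inbox; case: forallP => [_|]; first by rewrite eqxx.
  move=> /forallP; rewrite negb_forall => /existsP [i hi] _.
  by apply: leq_trans (leq_mdeg al i); rewrite leqNgt.
have {1}-> : F = (fun al => (if inbox al then F al else 0) + if inbox al then 0 else F al).
  by apply: funext => al; case: ifP; rewrite ?addr0 ?add0r.
rewrite substD; congr (_ + _).
have -> : (fun al => if inbox al then F al else 0) =
    (fun al => \sum_(b : {ffun 'I_n -> 'I_B}) F (ffval b) * mmono (ffval b) al).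
  apply: funext => al; rewrite (eq_bigr (fun b => if ffval b == al then F (ffval b) else 0)).
    by rewrite sum_box_ffval.
  by move=> b _; rewrite /mmono eq_sym; case: eqP; rewrite ?mulr1 ?mulr0.
by rewrite subst_sum; apply: eq_bigr => b _; rewrite substZ subst_mmono.
Qed.

Lemma subst_coef0 (F : mps k n) : subst F x 0%N = F ezero.
Proof.
rewrite /subst (eq_bigr (fun _ => F ezero)) ?sumr_const ?card_ffun ?card_ord ?exp1n //.
move=> b _; have -> : [ffun i => val (b i)] = ezero.
  by apply/ffunP => i; rewrite !ffunE; case: (b i) => -[].
by rewrite mono_ezero pcoef10 mulr1.
Qed.

(* The t-adically convergent series of the [subst (G j) x] is the substitution
   of the (locally finite) series of the [G j]. *)
Lemma subst_series (G : nat -> mps k n) m :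
  (forall j al, G j al != 0 -> (j <= mdeg al)%N) ->
  tdvd m (subst (fun al => \sum_(j < (mdeg al).+1) G j al) x - \sum_(j < m) subst (G j) x).
Proof.
move=> hG; rewrite -subst_sum -substB; apply: tdvd_subst => al.
apply: contraR; rewrite -ltnNge => hal.
rewrite (big_ord_widen m (fun j => G j al) hal) big_mkcond /= -sumrB big1 // => j _.
case: ifP => [_|/negbT]; first by rewrite subrr.
rewrite -leqNgt sub0r => hj; apply/eqP; rewrite oppr_eq0; apply: contraTT hj => /hG.
by rewrite -ltnNge ltnS.
Qed.

End Monomials.
Arguments mmono {k n} be.
Arguments ezero {n}.

Section Subalgebra.
Variable k : fieldType.
Local Notation ps := (ps k).
Variable S : ps -> Prop.
Hypothesis HS : subalgebra S.
Local Notation mI := (max_ideal S).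
Local Notation m2 := (max_ideal2 S).

Lemma S_const a : S (pconst a). Proof. by case: HS. Qed.
Lemma S0 : S 0. Proof. by rewrite -pconst0; apply: S_const. Qed.
Lemma S1 : S 1. Proof. exact: S_const. Qed.
Lemma SD f g : S f -> S g -> S (f + g). Proof. by case: HS => _ [h _]; apply: h. Qed.
Lemma SN f : S f -> S (- f). Proof. by case: HS => _ [_ [h _]]; apply: h. Qed.
Lemma SM f g : S f -> S g -> S (f * g). Proof. by case: HS => _ [_ [_ h]]; apply: h. Qed.
Lemma SB f g : S f -> S g -> S (f - g). Proof. by move=> hf hg; apply: SD => //; apply: SN. Qed.
Lemma S_sum (I : Type) (r : seq I) (P : pred I) (F : I -> ps) :
  (forall i, P i -> S (F i)) -> S (\sum_(i <- r | P i) F i).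
Proof. by move=> h; apply: big_ind; [exact: S0 | exact: SD | exact: h]. Qed.
Lemma SX f e : S f -> S (f ^+ e).
Proof. by move=> hf; elim: e => [|e IH]; [exact: S1 | rewrite exprS; apply: SM]. Qed.
Lemma S_prod (I : Type) (r : seq I) (P : pred I) (F : I -> ps) :
  (forall i, P i -> S (F i)) -> S (\prod_(i <- r | P i) F i).
Proof. by move=> h; apply: big_ind; [exact: S1 | exact: SM | exact: h]. Qed.

Lemma mI_S f : mI f -> S f. Proof. by case. Qed.
Lemma mI0 : mI 0. Proof. by split; [exact: S0|]. Qed.
Lemma mID f g : mI f -> mI g -> mI (f + g).
Proof. by move=> [hf hf0] [hg hg0]; split; [apply: SD | rewrite pcoefD hf0 hg0 addr0]. Qed.
Lemma mIN f : mI f -> mI (- f).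
Proof. by move=> [hf hf0]; split; [apply: SN | rewrite pcoefN hf0 oppr0]. Qed.
Lemma mIB f g : mI f -> mI g -> mI (f - g).
Proof. by move=> hf hg; apply: mID => //; apply: mIN. Qed.
Lemma mIMl r f : S r -> mI f -> mI (r * f).
Proof. by move=> hr [hf hf0]; split; [apply: SM | rewrite pcoefM0 hf0 mulr0]. Qed.
Lemma mI_tdvd1 f : S f -> tdvd 1 f -> mI f.
Proof. by move=> hf h; split => //; apply: h. Qed.
Lemma mI_sum (I : Type) (r : seq I) (P : pred I) (F : I -> ps) :
  (forall i, P i -> mI (F i)) -> mI (\sum_(i <- r | P i) F i).
Proof. by move=> h; apply: big_ind; [exact: mI0 | exact: mID | exact: h]. Qed.

Lemma m2E f : m2 f <-> exists (N : nat) (g h : nat -> ps),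
    (forall j, (j < N)%N -> mI (g j) /\ mI (h j)) /\ f = \sum_(j < N) g j * h j.
Proof. by split=> -[N [g [h [H ->]]]]; exists N, g, h; rewrite psumE. Qed.

Lemma m2_0 : m2 0.
Proof. by apply/m2E; exists 0%N, (fun _ => 0), (fun _ => 0); rewrite big_ord0. Qed.

Lemma m2_mul f g : mI f -> mI g -> m2 (f * g).
Proof.
move=> hf hg; apply/m2E; exists 1%N, (fun _ => f), (fun _ => g).
by rewrite big_ord1; split => // j _.
Qed.

Lemma m2D f g : m2 f -> m2 g -> m2 (f + g).
Proof.
move=> /m2E [N1 [g1 [h1 [H1 ->]]]] /m2E [N2 [g2 [h2 [H2 ->]]]]; apply/m2E.
exists (N1 + N2)%N, (fun j => if (j < N1)%N then g1 j else g2 (j - N1)%N),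
  (fun j => if (j < N1)%N then h1 j else h2 (j - N1)%N); split.
  move=> j hj; case: ifP => hjN; first exact: H1.
  by apply: H2; move: hjN hj => /negbT; rewrite -leqNgt; lia.
rewrite big_split_ord /=; congr (_ + _); apply: eq_bigr => i _ /=.
  by rewrite ltn_ord.
by rewrite ltnNge leq_addr /= addKn.
Qed.

Lemma m2Ml r f : S r -> m2 f -> m2 (r * f).
Proof.
move=> hr /m2E [N [g [h [H ->]]]]; apply/m2E.
exists N, (fun j => r * g j), h; split.
  by move=> j hj; have [hg hh] := H j hj; split => //; apply: mIMl.
by rewrite mulr_sumr; apply: eq_bigr => j _; rewrite mulrA.
Qed.

Lemma m2N f : m2 f -> m2 (- f).
Proof. by move=> h; rewrite -mulN1r; apply: m2Ml => //; apply: SN; exact: S1. Qed.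
Lemma m2_sum (I : Type) (r : seq I) (P : pred I) (F : I -> ps) :
  (forall i, P i -> m2 (F i)) -> m2 (\sum_(i <- r | P i) F i).
Proof. by move=> h; apply: big_ind; [exact: m2_0 | exact: m2D | exact: h]. Qed.

Lemma m2_mI f : m2 f -> mI f.
Proof.
move=> /m2E [N [g [h [H ->]]]]; apply: mI_sum => j _.
by have [hg hh] := H j (ltn_ord j); apply: mIMl => //; exact: mI_S.
Qed.

Lemma val_m_gt0 b : val_m S b -> (0 < b)%N.
Proof.
by move=> [f [[_ hf0] [hb _]]]; rewrite lt0n; apply: contraNneq hb => hb0; rewrite hb0 hf0.
Qed.

(* Products of two elements of m of order at least b have order at least 2b > b. *)
Lemma val_m2_lt b : val_m2 S b -> exists2 p, (p < b)%N & val_m S p.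
Proof.
move=> [g [hg hgb]].
have b_gt0 : (0 < b)%N by apply: val_m_gt0; exists g; split => //; exact: m2_mI.
move/m2E: hg => [N [gs [hs [H hgE]]]].
have [j [hj hnot]] : exists j, (j < N)%N /\ ~ (tdvd b (gs j) /\ tdvd b (hs j)).
  apply: NNPP => hall; case: hgb => /eqP hgb _; apply: hgb; rewrite hgE.
  have : tdvd (b + b)%N (\sum_(j < N) gs j * hs j).
    apply: tdvd_sum => i _.
    have [[hg hh]|hn] := classic (tdvd b (gs i) /\ tdvd b (hs i)); first exact: tdvdM.
    by exfalso; apply: hall; exists i.
  by apply; rewrite -{1}[b]add0n ltn_add2r.
have [hgm hhm] := H j hj.
have [f [hfm hnb]] : exists f, mI f /\ ~ tdvd b f.
  by case: (classic (tdvd b (gs j))) => hgj; [exists (hs j) | exists (gs j)]; split; tauto.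
have [p hpb hp] := not_tdvd_vord hnb.
by exists p => //; exists f.
Qed.

End Subalgebra.

Section HerzogKunz.
Variable k : fieldType.
Local Notation ps := (ps k).
Variable S : ps -> Prop.
Hypothesis HS : subalgebra S.
Variable c : nat.
Hypothesis Hc : forall f, tdvd c f -> S f.
Hypothesis c_gt0 : (0 < c)%N.
Variables (n : nat) (a : nat -> nat).
Hypothesis Hinc : forall i j, (i < j)%N -> (j < n)%N -> (a i < a j)%N.
Hypothesis HHK : forall b, HKset S b <-> exists2 i, (i < n)%N & a i = b.
Local Notation mI := (max_ideal S).
Local Notation m2 := (max_ideal2 S).
Local Notation a0 := (a 0%N).

Lemma tdvd_conductor_mI f : tdvd c f -> mI f.
Proof. by move=> h; apply: mI_tdvd1; [exact: Hc | exact: tdvdW h]. Qed.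

Lemma tdvd_conductor_m2 f : tdvd (c + c)%N f -> m2 f.
Proof.
move=> h; rewrite (tshiftK (tdvdW (leq_addr c c) h)).
by apply: m2_mul; apply: tdvd_conductor_mI; [exact: tdvd_tpow | exact: tdvd_tshift].
Qed.

Lemma HK_mono i j : (i <= j)%N -> (j < n)%N -> (a i <= a j)%N.
Proof. by rewrite leq_eqVlt => /orP [/eqP -> //|hij hj]; exact: ltnW (Hinc hij hj). Qed.

Lemma HKset_a i : (i < n)%N -> HKset S (a i).
Proof. by move=> hi; apply/HHK; exists i. Qed.

Lemma val_m_HK_below b : val_m S b -> exists2 i, (i < n)%N & (a i <= b)%N.
Proof.
elim/ltn_ind: b => b IH hb.
have [/HHK [i hi <-]|hK] := classic (HKset S b); first by exists i.
have [p hpb /IH [//|i hi hai]] : exists2 p, (p < b)%N & val_m S p.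
  by apply: val_m2_lt => //; apply: NNPP => h2; apply: hK.
by exists i => //; apply: leq_trans hai (ltnW hpb).
Qed.

Lemma HK_representatives : exists y : nat -> ps, forall i, (i < n)%N -> S (y i) /\ vord (y i) (a i).
Proof.
have hy i : exists yi, (i < n)%N -> S yi /\ vord yi (a i).
  have [hi|] := ltnP i n; last by exists 0.
  by have [[yi [[hyi _] hyv]] _] := HKset_a hi; exists yi.
by have [y Hy] := choice hy; exists y.
Qed.

Lemma HK_leq_val_m b : val_m S b -> (a0 <= b)%N.
Proof. by move=> /val_m_HK_below [i hi hab]; apply: leq_trans hab; exact: HK_mono. Qed.

Lemma mI_tdvd_a0 f : mI f -> tdvd a0 f.
Proof.
move=> hf; apply: NNPP => /not_tdvd_vord [p hp hv].
by have := HK_leq_val_m (ex_intro _ f (conj hf hv)); rewrite leqNgt hp.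
Qed.

Lemma m2_tdvd_2a0 f : m2 f -> tdvd (a0 + a0)%N f.
Proof.
move=> /m2E [N [g [h [H ->]]]]; apply: tdvd_sum => j _.
by have [h1 h2] := H j (ltn_ord j); apply: tdvdM; apply: mI_tdvd_a0.
Qed.

Lemma HK_length_gt0 : (0 < n)%N.
Proof.
have := val_m_HK_below (ex_intro _ _ (conj (tdvd_conductor_mI (@tdvd_tpow k c)) (vord_tpow k c))).
by case=> i hi _; apply: leq_ltn_trans hi.
Qed.

Lemma a0_gt0 : (0 < a0)%N.
Proof. by have [hv _] := HKset_a HK_length_gt0; apply: val_m_gt0 hv. Qed.

(* If n = 1 then m = t^{a_1} k[[t]], so R = k[[t]] is regular. *)
Lemma HK_length_gt1 D : (exists f, ~ S f) -> (forall f, tdvd D f -> S f) ->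
  (exists2 i, (i < n)%N & (D <= a i)%N) -> (1 < n)%N.
Proof.
move=> [f0 hf0] hDS [i hin hDa]; rewrite ltnNge; apply/negP => hn1.
have n1 : n = 1%N by have := HK_length_gt0; lia.
have i0 : i = 0%N by lia.
subst i.
have D_gt0 : (0 < D)%N.
  rewrite lt0n; apply/negP => /eqP D0; apply: hf0; apply: hDS; rewrite D0.
  by move=> j.
have hDm h : tdvd D h -> mI h by move=> hh; apply: mI_tdvd1; [exact: hDS | exact: tdvdW D_gt0 hh].
have aD : a0 = D.
  apply/eqP; rewrite eqn_leq hDa andbT; apply: HK_leq_val_m.
  by exists (tpow D); split; [apply: hDm; exact: tdvd_tpow | exact: vord_tpow].
have [D1|D_gt1] := leqP D 1.
  apply: hf0; rewrite -[f0](subrK (pconst (f0 0%N))); apply: SD => //; last exact: S_const.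
  apply: hDS => j /leq_trans /(_ D1); rewrite ltnS leqn0 => /eqP ->.
  by rewrite pcoefB /pconst eqxx subrr.
have hv : val_m S D.+1.
  exists (tpow D.+1); split; last exact: vord_tpow.
  by apply: hDm; apply: tdvdW (leqnSn D) _; exact: tdvd_tpow.
have [/HHK [j hj]|hK] := classic (HKset S D.+1).
  move=> haj; have j0 : j = 0%N by rewrite n1 in hj; lia.
  by move: haj; rewrite j0 aD; lia.
have [g [hg [hgD _]]] : val_m2 S D.+1 by apply: NNPP => h2; apply: hK; split.
by case/eqP: hgD; apply: m2_tdvd_2a0 => //; rewrite aD; lia.
Qed.

End HerzogKunz.

Section Generators.
Variable k : fieldType.
Local Notation ps := (ps k).
Variable S : ps -> Prop.
Hypothesis HS : subalgebra S.
Variable c : nat.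
Hypothesis Hc : forall f, tdvd c f -> S f.
Hypothesis c_gt0 : (0 < c)%N.
Variables (n : nat) (a : nat -> nat).
Hypothesis Hinc : forall i j, (i < j)%N -> (j < n)%N -> (a i < a j)%N.
Hypothesis HHK : forall b, HKset S b <-> exists2 i, (i < n)%N & a i = b.
Variable x : nat -> ps.
Hypothesis Hx : forall i, (i < n)%N -> S (x i) /\ vord (x i) (a i).
Local Notation mI := (max_ideal S).
Local Notation m2 := (max_ideal2 S).
Local Notation a0 := (a 0%N).

Lemma x_S i : (i < n)%N -> S (x i). Proof. by move/Hx => []. Qed.
Lemma x_tdvd i : (i < n)%N -> tdvd (a i) (x i). Proof. by move/Hx => [_ /vord_tdvd]. Qed.
Lemma x_tdvd_a0 i : (i < n)%N -> tdvd a0 (x i).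
Proof. by move=> hi; apply: tdvdW (x_tdvd hi); apply: (HK_mono Hinc). Qed.
Lemma x_mI i : (i < n)%N -> mI (x i).
Proof.
move=> hi; apply: mI_tdvd1; first exact: x_S.
by apply: tdvdW (x_tdvd_a0 hi); exact: (a0_gt0 HS Hc c_gt0 HHK).
Qed.
Lemma x_tdvd1 (i : 'I_n) : tdvd 1 (x i).
Proof. by move=> j; rewrite ltnS leqn0 => /eqP ->; case: (x_mI (ltn_ord i)). Qed.

Definition xlin (g : 'I_n -> k) : ps := \sum_(i < n) pconst (g i) * x i.

Lemma xlin0 : xlin (fun _ => 0) = 0.
Proof. by rewrite /xlin big1 // => i _; rewrite pconst0 mul0r. Qed.

Lemma xlin_upd (g : 'I_n -> k) (i : 'I_n) l :
  xlin (fun j => g j + (if j == i then l else 0)) = xlin g + pconst l * x i.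
Proof.
rewrite /xlin (eq_bigr (fun j => pconst (g j) * x j + pconst (if j == i then l else 0) * x j));
  last by move=> j _; rewrite pconstD mulrDl.
rewrite big_split /=; congr (_ + _); rewrite (bigD1 i) //= eqxx big1 ?addr0 // => j /negbTE ->.
by rewrite pconst0 mul0r.
Qed.

(* The x_i span m/m^2; the coefficients only involve x_i of order at least
   the order of f, since the decomposition subtracts leading terms. *)
Lemma m_decomp D f : mI f -> tdvd D f ->
  exists g : 'I_n -> k, (forall i, g i != 0 -> (D <= a i)%N) /\ m2 (f - xlin g).
Proof.
suff: forall q f, mI f -> tdvd D f -> tdvd (c + c - q) f ->
    exists g : 'I_n -> k, (forall i, g i != 0 -> (D <= a i)%N) /\ m2 (f - xlin g).
  by move=> h hf hfD; apply: (h (c + c)%N) => //; rewrite subnn.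
elim=> [|q IH] {}f hf hfD hfq.
  exists (fun _ => 0); split => [i|]; first by rewrite eqxx.
  by rewrite xlin0 subr0; apply: (tdvd_conductor_m2 Hc c_gt0); rewrite subn0 in hfq.
set p := (c + c - q.+1)%N.
have [hfp|hfp] := eqVneq (f p) 0.
  apply: IH => // i hi; case: (ltnP i p) => hip; first exact: hfq.
  by have -> : i = p by lia.
have hpD : (D <= p)%N by rewrite leqNgt; apply: contra hfp => hpD; apply/eqP; exact: hfD.
have step y : vord y p -> mI y -> exists g : 'I_n -> k,
    (forall i, g i != 0 -> (D <= a i)%N) /\ m2 (f - pconst (f p / y p) * y - xlin g).
  move=> hy hym; apply: IH.
  - by apply: (mIB HS hf); apply: (mIMl HS (S_const HS _) hym).
  - by apply: tdvdB hfD (tdvdMl _ (tdvdW hpD (vord_tdvd hy))).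
  - by apply: tdvdW (tdvd_cancel_lead hy hfq); lia.
have [/HHK [i hi hai]|hK] := classic (HKset S p).
  have hxv : vord (x i) p by rewrite -hai; case: (Hx hi).
  have [g [hgD hg]] := step _ hxv (x_mI hi).
  exists (fun j => g j + (if j == Ordinal hi then f p / x i p else 0)); split.
    move=> j /=; case: (eqVneq j (Ordinal hi)) => [-> _|_]; first by rewrite hai.
    by rewrite addr0; apply: hgD.
  by rewrite xlin_upd opprD addrA addrAC.
have [y [hy hyv]] : val_m2 S p.
  by apply: NNPP => h2; apply: hK; split => //; exists f.
have [g [hgD hg]] := step _ hyv (m2_mI HS hy).
exists g; split => //.
rewrite -[f](subrK (pconst (f p / y p) * y)) addrAC.
by apply: m2D hg (m2Ml HS (S_const HS _) hy).
Qed.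

Lemma xlin_m2_eq0 (g : 'I_n -> k) : m2 (xlin g) -> forall i, g i = 0.
Proof.
move=> hm i; apply: NNPP => /eqP hgi.
have [i0 hg0 hmin] := @arg_minnP _ i (fun j : 'I_n => g j != 0) val hgi.
have hrest : tdvd (a i0).+1 (\sum_(j < n | j != i0) pconst (g j) * x j).
  apply: tdvd_sum => j hj.
  have [->|hgj] := eqVneq (g j) 0; first by rewrite pconst0 mul0r.
  apply: tdvdMl; apply: tdvdW (x_tdvd (ltn_ord j)).
  apply: Hinc => //; rewrite ltn_neqAle hmin // andbT.
  by apply: contra hj => /eqP h; apply/eqP/val_inj.
have hv : vord (xlin g) (a i0).
  rewrite /xlin (bigD1 i0) //=; split.
    rewrite pcoefD pcoefCM hrest // addr0 mulf_neq0 //; by case: (Hx (ltn_ord i0)) => _ [].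
  move=> j hj; rewrite pcoefD pcoefCM hrest ?(x_tdvd (ltn_ord i0)) ?mulr0 ?addr0 //.
  exact: ltnW.
by have [_] := HKset_a HHK (ltn_ord i0); apply; exists (xlin g).
Qed.

(* A generator of the conductor outside m^2 has some order D with t^D k[[t]]
   inside R, and its decomposition along the x_i involves some a_i >= D. *)
Lemma conductor_HK_bound : (exists f, ~ S f) -> ~ (forall f, conductor S f -> m2 f) ->
  exists D, [/\ (0 < D)%N, (forall f, tdvd D f -> S f) & exists2 i, (i < n)%N & (D <= a i)%N].
Proof.
move=> [f0 hf0] hC.
have [f [hcf hnf]] : exists f, conductor S f /\ ~ m2 f.
  by apply: NNPP => hn; apply: hC => f hcf; apply: NNPP => hm; apply: hn; exists f.
have [|D hD] := @vord_exists _ f; first by move=> h; apply: hnf; rewrite h; exact: m2_0.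
have hDS h : tdvd D h -> S h by move=> hh; have [g ->] := vord_dvd hD hh; exact: hcf.
have D_gt0 : (0 < D)%N.
  by rewrite lt0n; apply/eqP => D0; apply: hf0; apply: hDS; rewrite D0.
have hfm : mI f.
  apply: mI_tdvd1; last exact: tdvdW D_gt0 (vord_tdvd hD).
  by rewrite -[f]mulr1; exact: hcf.
have [g [hgD hg]] := m_decomp hfm (vord_tdvd hD).
have [i hgi] : exists i, g i != 0.
  apply: NNPP => hall; apply: hnf.
  have xg0 : xlin g = 0.
    rewrite /xlin big1 // => i _; have /negPn/eqP -> : ~~ (g i != 0).
      by apply/negP => h; apply: hall; exists i.
    by rewrite pconst0 mul0r.
  by rewrite -[f](subrK (xlin g)) {2}xg0 addr0.
by exists D; split => //; exists i => //; exact: hgD.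
Qed.

Local Notation exps := {ffun 'I_n -> nat}.
Local Notation mono al := (monoeval al x).

Lemma mono_S (al : exps) : S (mono al).
Proof. by rewrite monoE; apply: (S_prod HS) => i _; apply: (SX HS); exact: x_S. Qed.

Lemma mono_tdvd_a0 (al : exps) : (1 <= mdeg al)%N -> tdvd a0 (mono al).
Proof.
move=> hd; have := @tdvd_mono k n x (fun _ => a0) al (fun i => x_tdvd_a0 (ltn_ord i)).
by apply: tdvdW; rewrite -big_distrl /= -/(mdeg al) -{1}[a0]mul1n leq_mul2r hd orbT.
Qed.

Lemma mono_mI (al : exps) : (1 <= mdeg al)%N -> mI (mono al).
Proof.
move=> hd; apply: mI_tdvd1; first exact: mono_S.
by apply: tdvdW (mono_tdvd_a0 hd); exact: (a0_gt0 HS Hc c_gt0 HHK).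
Qed.

Lemma mono_m2 (al : exps) : (2 <= mdeg al)%N -> m2 (mono al).
Proof.
move=> hd; have [|i hi] := @mdeg_gt0 _ al; first exact: leq_trans hd.
rewrite -(eadd_eunit_esub1 hi) mono_eadd mono_eunit.
apply: m2_mul; first exact: x_mI (ltn_ord i).
apply: mono_mI; move: hd; rewrite -{1}(eadd_eunit_esub1 hi) mdeg_eadd mdeg_eunit; lia.
Qed.

Inductive xpoly (D : nat) : ps -> Prop :=
| xpoly0 : xpoly D 0
| xpoly_cons (b : k) (al : exps) (y : ps) : (D <= mdeg al)%N -> xpoly D y ->
    xpoly D (pconst b * mono al + y).

Lemma xpolyD D y1 y2 : xpoly D y1 -> xpoly D y2 -> xpoly D (y1 + y2).
Proof.
elim=> [|b al y hd hy IH] h2; first by rewrite add0r.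
by rewrite -addrA; apply: xpoly_cons => //; apply: IH.
Qed.

Lemma xpolyW D D' y : (D' <= D)%N -> xpoly D y -> xpoly D' y.
Proof.
move=> hD; elim=> [|b al y' hd hy IH]; first exact: xpoly0.
by apply: xpoly_cons => //; apply: leq_trans hD hd.
Qed.

Lemma xpoly_mono D (al : exps) : (D <= mdeg al)%N -> xpoly D (mono al).
Proof. by move=> hd; have := xpoly_cons 1 hd (xpoly0 D); rewrite pconst1 mul1r addr0. Qed.

Lemma xpolyZ D b y : xpoly D y -> xpoly D (pconst b * y).
Proof.
elim=> [|b' al y' hd hy IH]; first by rewrite mulr0; exact: xpoly0.
by rewrite mulrDr mulrA -pconstM; exact: xpoly_cons.
Qed.

Lemma xpoly_sum D (I : Type) (r : seq I) (P : pred I) (F : I -> ps) :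
  (forall i, P i -> xpoly D (F i)) -> xpoly D (\sum_(i <- r | P i) F i).
Proof. by move=> h; apply: big_ind; [exact: xpoly0 | exact: xpolyD | exact: h]. Qed.

Lemma xpolyM D1 D2 y1 y2 : xpoly D1 y1 -> xpoly D2 y2 -> xpoly (D1 + D2) (y1 * y2).
Proof.
have monoM (al : exps) y : (D1 <= mdeg al)%N -> xpoly D2 y -> xpoly (D1 + D2) (mono al * y).
  move=> hd; elim=> [|b be y' hd' hy IH]; first by rewrite mulr0; exact: xpoly0.
  rewrite mulrDr; apply: xpolyD => //.
  rewrite mulrA (mulrC (mono al)) -mulrA -mono_eadd; apply: xpolyZ.
  by apply: xpoly_mono; rewrite mdeg_eadd leq_add.
move=> h1 h2; elim: h1 => [|b al y hd hy IH]; first by rewrite mul0r; exact: xpoly0.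
by rewrite mulrDl; apply: xpolyD => //; rewrite -mulrA; apply: xpolyZ; exact: monoM.
Qed.

Lemma xpoly_tdvd_a0 D y : (1 <= D)%N -> xpoly D y -> tdvd a0 y.
Proof.
move=> hD; elim=> [|b al y' hd hy IH]; first exact: tdvd0.
by apply: tdvdD => //; apply: tdvdMl; apply: mono_tdvd_a0; exact: leq_trans hD hd.
Qed.

Lemma xpoly_const b : xpoly 0 (pconst b).
Proof.
have := xpoly_cons b (leq0n (mdeg (@ezero n))) (xpoly0 0).
by rewrite mono_ezero mulr1 addr0.
Qed.

Lemma xpoly_xlin (g : 'I_n -> k) : xpoly 1 (xlin g).
Proof.
apply: xpoly_sum => i _; apply: xpolyZ; rewrite -(mono_eunit x i).
by apply: xpoly_mono; rewrite mdeg_eunit.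
Qed.

Lemma xpoly_subst D y : xpoly D y -> exists F : mps k n,
  (forall al, F al != 0 -> (D <= mdeg al)%N) /\ subst F x = y.
Proof.
elim=> [|b al y' hd hy [F [hF hFy]]].
  by exists (fun _ => 0); split; [move=> ?; rewrite eqxx | exact: subst0].
exists (fun be => b * mmono al be + F be); split.
  move=> be; have [-> _ //|hne] := eqVneq be al.
  by rewrite mmono_neq // mulr0 add0r; exact: hF.
by rewrite substD substZ hFy (subst_mmono x_tdvd1).
Qed.

Lemma subst_S (F : mps k n) : S (subst F x).
Proof.
have [G [hG ->]] := subst_box_split x_tdvd1 c F.
apply: (SD HS).
  by apply: (S_sum HS) => b _; apply: (SM HS); [exact: S_const | exact: mono_S].
by apply: Hc; apply: (tdvd_subst x_tdvd1).
Qed.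

Lemma m2_approx T : (forall h, mI h -> exists y, xpoly 1 y /\ tdvd T (h - y)) ->
  forall f, m2 f -> exists y, xpoly 1 y /\ tdvd (T + a0)%N (f - y).
Proof.
move=> happ f /m2E [N [g [h [H ->]]]].
apply: (big_ind (fun f => exists y, xpoly 1 y /\ tdvd (T + a0)%N (f - y))).
- by exists 0; split; [exact: xpoly0 | rewrite subr0].
- move=> f1 f2 [y1 [hy1 h1]] [y2 [hy2 h2]]; exists (y1 + y2); split; first exact: xpolyD.
  by rewrite opprD addrACA; apply: tdvdD.
move=> j _; have [hgm hhm] := H j (ltn_ord j).
have [y1 [hy1 h1]] := happ _ hgm; have [y2 [hy2 h2]] := happ _ hhm.
exists (y1 * y2); split; first by apply: xpolyW (xpolyM hy1 hy2).
have -> : g j * h j - y1 * y2 = (g j - y1) * h j + y1 * (h j - y2) by ring.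
apply: tdvdD; first exact: tdvdM h1 (mI_tdvd_a0 HS Hinc HHK hhm).
by rewrite addnC; exact: tdvdM (xpoly_tdvd_a0 (leqnn 1) hy1) h2.
Qed.

Lemma m_approx T h : mI h -> exists y, xpoly 1 y /\ tdvd T (h - y).
Proof.
elim/ltn_ind: T h => T IH h hh.
have [hT|hT] := leqP T a0.
  by exists 0; split; [exact: xpoly0 | rewrite subr0; exact: tdvdW hT (mI_tdvd_a0 HS Hinc HHK hh)].
have a0_pos := a0_gt0 HS Hc c_gt0 HHK.
have [g [_ hg]] := m_decomp hh (tdvd0n h).
have [|y [hy hyT]] := m2_approx (T := (T - a0)%N) _ hg; first by apply: IH; lia.
exists (xlin g + y); split; first exact: xpolyD (xpoly_xlin g) hy.
by rewrite opprD addrA; move: hyT; rewrite subnK // ltnW.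
Qed.

Lemma tdvd_approx D T h : (1 <= D)%N -> tdvd (D * c)%N h -> exists y, xpoly D y /\ tdvd T (h - y).
Proof.
elim: D h => [//|D IH] h _ hh.
have [D0|D_gt0] := posnP D.
  subst D; apply: m_approx; apply: (tdvd_conductor_mI Hc c_gt0).
  by rewrite mul1n in hh.
have hch : tdvd c h by apply: tdvdW hh; rewrite mulSn leq_addr.
have hsh : tdvd (D * c)%N (tshift c h) by apply: tdvd_tshift; rewrite -mulSn.
have [y' [hy' hy'T]] := IH (tshift c h) D_gt0 hsh.
have [y0 [hy0 hy0T]] := m_approx T (tdvd_conductor_mI Hc c_gt0 (@tdvd_tpow k c)).
exists (y0 * y'); split; first by rewrite -add1n; exact: xpolyM.
rewrite {1}(tshiftK hch).
have -> : tpow c * tshift c h - y0 * y' = tpow c * (tshift c h - y') + (tpow c - y0) * y' by ring.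
by apply: tdvdD; [apply: tdvdMl | apply: tdvdMr].
Qed.

Lemma approx_subst j h : S h -> tdvd (j * c)%N h -> exists F : mps k n,
  (forall al, F al != 0 -> (j <= mdeg al)%N) /\ tdvd (j.+1 * c)%N (h - subst F x).
Proof.
move=> hS hh.
have [y [hy hyT]] : exists y, xpoly j y /\ tdvd (j.+1 * c)%N (h - y).
  have [j0|j_gt0] := posnP j; last exact: tdvd_approx.
  subst j; have hm : mI (h - pconst (h 0%N)).
    split; first exact: (SB HS hS (S_const HS (h 0%N))).
    by rewrite pcoefB /pconst eqxx subrr.
  have [y [hy hyT]] := m_approx (1 * c)%N hm.
  exists (pconst (h 0%N) + y); split; first exact: xpolyD (xpoly_const _) (xpolyW (leq0n 1) hy).
  by rewrite opprD addrA.
have [F [hF hFy]] := xpoly_subst hy.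
by exists F; rewrite hFy.
Qed.

Lemma S_subst f : S f -> exists F : mps k n, f = subst F x.
Proof.
move=> hf.
have step (jh : nat * ps) : exists F : mps k n, S jh.2 -> tdvd (jh.1 * c)%N jh.2 ->
    (forall al, F al != 0 -> (jh.1 <= mdeg al)%N) /\ tdvd (jh.1.+1 * c)%N (jh.2 - subst F x).
  have [[hS hh]|hn] := classic (S jh.2 /\ tdvd (jh.1 * c)%N jh.2).
    by have [F hF] := approx_subst hS hh; exists F.
  by exists (fun _ => 0) => hS hh; exfalso; apply: hn.
have [Fs hFs] := choice step.
(* [r j] is the remainder after j approximation steps. *)
pose fix r j := if j is j'.+1 then r j' - subst (Fs (j', r j')) x else f.
have hr j : S (r j) /\ tdvd (j * c)%N (r j).
  elim: j => [|j [hS hh]]; first by split => //; rewrite mul0n.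
  have [_ h2] := hFs (j, r j) hS hh.
  by split => //=; apply: (SB HS) => //; exact: subst_S.
pose G j := Fs (j, r j).
have hG j al : G j al != 0 -> (j <= mdeg al)%N.
  by have [hS hh] := hr j; have [h1 _] := hFs (j, r j) hS hh; exact: h1.
have tele J : \sum_(j < J) subst (G j) x = f - r J.
  by elim: J => [|J IH]; rewrite ?big_ord0 ?subrr // big_ord_recr /= IH /G; ring.
exists (fun al => \sum_(j < (mdeg al).+1) G j al); apply: funext => m.
have := subst_series x_tdvd1 (m := m.+1) hG; rewrite tele => /(_ m (ltnSn m)).
rewrite pcoefB pcoefB (proj2 (hr m.+1)) ?subr0 => [/eqP|]; first by rewrite subr_eq0 => /eqP.
by rewrite -{1}[m.+1]muln1 leq_mul2l c_gt0 orbT.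
Qed.

Lemma xlin_sum N (g : nat -> 'I_n -> k) :
  xlin (fun l => \sum_(j < N) g j l) = \sum_(j < N) xlin (g j).
Proof.
rewrite /xlin exchange_big /=; apply: eq_bigr => l _.
by rewrite pconst_sum mulr_suml.
Qed.

Lemma xlinZ b (g : 'I_n -> k) : xlin (fun l => b * g l) = pconst b * xlin g.
Proof. by rewrite /xlin mulr_sumr; apply: eq_bigr => l _; rewrite pconstM mulrA. Qed.

Lemma xlin_mI g : mI (xlin g).
Proof. by apply: (mI_sum HS) => i _; apply: (mIMl HS (S_const HS (g i))); exact: x_mI. Qed.

Lemma m2_xlin_coef (g : 'I_n -> k) (A : k) (j : 'I_n) : m2 (pconst A * x j - xlin g) -> g j = A.
Proof.
have -> : pconst A * x j - xlin g = xlin (fun l => (if l == j then A else 0) - g l).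
  rewrite /xlin [RHS](eq_bigr (fun l => pconst (if l == j then A else 0) * x l - pconst (g l) * x l));
    last by move=> l _; rewrite pconstD pconstN mulrDl mulNr.
  rewrite sumrB [in RHS](bigD1 j) //= eqxx [in RHS]big1 ?addr0 // => l /negbTE ->.
  by rewrite pconst0 mul0r.
by move/xlin_m2_eq0/(_ j); rewrite eqxx => /eqP; rewrite subr_eq0 => /eqP.
Qed.

Lemma subst_m2 (G : mps k n) : (forall al, (mdeg al <= 1)%N -> G al = 0) -> m2 (subst G x).
Proof.
move=> hG; have [F [hF ->]] := subst_box_split x_tdvd1 (c + c) G.
apply: m2D; last by apply: (tdvd_conductor_m2 Hc c_gt0); apply: (tdvd_subst x_tdvd1).
apply: m2_sum => b _; have [hd|hd] := leqP (mdeg (ffval b)) 1.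
  by rewrite hG // pconst0 mul0r; exact: m2_0.
by apply: (m2Ml HS (S_const HS _)); exact: mono_m2.
Qed.

Lemma subst_linear_part (G : mps k n) :
  m2 (subst G x - pconst (G ezero) - xlin (fun l => G (eunit l))).
Proof.
pose G' al := G al - G ezero * mmono ezero al - \sum_(l < n) G (eunit l) * mmono (eunit l) al.
have <- : subst G' x = subst G x - pconst (G ezero) - xlin (fun l => G (eunit l)).
  rewrite !substB substZ subst_sum (subst_mmono x_tdvd1) mono_ezero mulr1.
  congr (_ - _); apply: eq_bigr => l _.
  by rewrite substZ (subst_mmono x_tdvd1) mono_eunit.
apply: subst_m2 => al hal.
have [/mdeg_eq0 ->|hp] := posnP (mdeg al).
  rewrite /G' mmono_eq mulr1 subrr sub0r big1 ?oppr0 // => l _.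
  by rewrite mmono_neq ?mulr0 // eq_sym eunit_neq0.
have [i ->] : exists i, al = eunit i by apply: mdeg_eq1; apply/eqP; rewrite eqn_leq hal hp.
rewrite /G' mmono_neq ?mulr0 ?subr0; last exact: eunit_neq0.
rewrite (bigD1 i) //= mmono_eq mulr1 big1 ?addr0 ?subrr // => l hl.
by rewrite mmono_neq ?mulr0 //; apply: contra hl => /eqP /eunit_inj ->.
Qed.

(* The x_i being independent modulo m^2, a relation has no constant or
   linear term. *)
Lemma relation_low_coefs (F : mps k n) : subst F x = 0 ->
  F ezero = 0 /\ forall l, F (eunit l) = 0.
Proof.
move=> hF; have F0 : F ezero = 0 by rewrite -(subst_coef0 x) hF.
split=> // l; apply: (@xlin_m2_eq0 (fun l => F (eunit l))).
rewrite -[xlin _]opprK; apply: (m2N HS).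
by have := subst_linear_part F; rewrite hF F0 pconst0 subrr sub0r.
Qed.

Lemma pderiv_eunit_sym (F : mps k n) i l : pderiv i F (eunit l) = pderiv l F (eunit i).
Proof.
rewrite /pderiv !ffunE eq_sym; congr (_ * F _).
by apply/ffunP => m; rewrite !ffunE addnC.
Qed.

Lemma pderiv_ezero (F : mps k n) i : pderiv i F ezero = F (eunit i).
Proof.
rewrite /pderiv ffunE mul1r; congr F.
by apply/ffunP => m; rewrite !ffunE.
Qed.

(* Modulo m^2, the coordinates of an element of N are given by a combination
   of the Hessians at 0 of the relations, a symmetric matrix. *)
Lemma relations_linear_part N (r : nat -> ps) (F : nat -> mps k n) :
  (forall j, (j < N)%N -> S (r j) /\ subst (F j) x = pzero k) ->
  exists sg : 'I_n -> 'I_n -> k, (forall i l, sg i l = sg l i) /\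
    forall i : 'I_n, m2 (psum N (fun j => pmul (r j) (subst (pderiv i (F j)) x)) - xlin (sg i)).
Proof.
move=> hR.
pose s j i l := pderiv i (F j) (eunit l).
exists (fun i l => \sum_(j < N) r j 0%N * s j i l); split.
  by move=> i l; apply: eq_bigr => j _; rewrite /s pderiv_eunit_sym.
move=> i; rewrite psumE (xlin_sum N (fun j l => r j 0%N * s j i l)) -sumrB.
apply: m2_sum => j _.
have [hrj hFj] := hR j (ltn_ord j).
have hdj : m2 (subst (pderiv i (F j)) x - xlin (s j i)).
  have := subst_linear_part (pderiv i (F j)).
  by rewrite pderiv_ezero (proj2 (relation_low_coefs hFj)) pconst0 subr0.
rewrite xlinZ.
have -> : pmul (r j) (subst (pderiv i (F j)) x) - pconst (r j 0%N) * xlin (s j i) =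
  r j * (subst (pderiv i (F j)) x - xlin (s j i)) + (r j - pconst (r j 0%N)) * xlin (s j i).
  by change (pmul ?u ?v) with (u * v); ring.
apply: m2D; first exact: (m2Ml HS hrj hdj).
apply: m2_mul; last exact: xlin_mI.
by split; [exact: (SB HS hrj (S_const HS _)) | rewrite pcoefB /pconst eqxx subrr].
Qed.

Definition omega_pair (i0 i1 : 'I_n) (e0 e1 : nat) : 'I_n -> ps :=
  fun i => (if i == i0 then pconst e1%:R * x i1 else 0)
         - (if i == i1 then pconst e0%:R * x i0 else 0).

(* Differentiating the relation X_i0^e1 - X_i1^e0 gives x_i0^(e1-1) times the form. *)
Lemma omega_pair_torsion (i0 i1 : 'I_n) (e0 e1 : nat) : i0 != i1 -> (0 < e0)%N -> (0 < e1)%N ->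
  x i0 ^+ e1 = x i1 ^+ e0 -> in_relations S x (vscale (x i0 ^+ e1.-1) (omega_pair i0 i1 e0 e1)).
Proof.
move=> h01 he0 he1 hrel.
pose xpow i e : exps := [ffun j => if j == i then e else 0%N].
exists 1%N, (fun _ => x i1), (fun _ => fun al => mmono (xpow i0 e1) al - mmono (xpow i1 e0) al).
split=> [j _|i].
  split; first exact: x_S (ltn_ord i1).
  by rewrite substB !(subst_mmono x_tdvd1) !mono_single hrel subrr.
rewrite psumE big_ord1.
have -> : pderiv i (fun al => mmono (xpow i0 e1) al - mmono (xpow i1 e0) al) = (fun al =>
    (if i == i0 then e1%:R else 0 : k) * mmono (xpow i0 e1.-1) al
  - (if i == i1 then e0%:R else 0 : k) * mmono (xpow i1 e0.-1) al).
  apply: funext => al; rewrite /pderiv /mmono !eq_shift_single //.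
  have [->|hi0] := eqVneq i i0.
    rewrite (negbTE h01) /= subr0 mul0r subr0.
    by case: eqP => [->|_]; rewrite ?mulr0 // ffunE eqxx prednK.
  have [->|hi1] := eqVneq i i1; last by rewrite /= subrr mulr0 !mul0r subrr.
  rewrite /= sub0r mulrN mul0r sub0r; congr (- _).
  by case: eqP => [->|_]; rewrite ?mulr0 // ffunE eqxx prednK.
rewrite substB !substZ !(subst_mmono x_tdvd1) !mono_single /vscale /omega_pair.
change (pmul ?u ?v) with (u * v).
have [->|hi0] := eqVneq i i0.
  by rewrite (negbTE h01) pconst0 !mul0r !subr0; ring.
have [_|hi1] := eqVneq i i1; last by rewrite !pconst0 !mul0r !subrr !mulr0.
have hx : x i0 ^+ e1.-1 * x i0 = x i1 * x i1 ^+ e0.-1 by rewrite -exprSr -exprS !prednK.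
rewrite pconst0 mul0r !sub0r.
transitivity (- pconst e0%:R * (x i0 ^+ e1.-1 * x i0)); first by ring.
by rewrite hx; ring.
Qed.

Lemma omega_pair_not_relation (i0 i1 : 'I_n) (e0 e1 : nat) : i0 != i1 ->
  (e0 + e1)%:R != 0 :> k -> ~ in_relations S x (omega_pair i0 i1 e0 e1).
Proof.
move=> h01 he [N [r [F [hR hw]]]].
have [sg [hsym hsg]] := relations_linear_part hR.
have hw' i : m2 (omega_pair i0 i1 e0 e1 i - xlin (sg i)) by rewrite hw; exact: hsg.
have e1E : sg i0 i1 = e1%:R.
  by apply: m2_xlin_coef; have := hw' i0; rewrite /omega_pair eqxx (negbTE h01) subr0.
have e0E : sg i1 i0 = - e0%:R.
  apply: m2_xlin_coef; have := hw' i1.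
  by rewrite /omega_pair eqxx eq_sym (negbTE h01) sub0r pconstN mulNr.
by move: he; rewrite natrD -e1E hsym e0E addrN eqxx.
Qed.

Lemma omega_nonzero_torsion : (1 < n)%N -> (a0 + a n.-1)%:R != 0 :> k ->
    x 0%N ^+ a n.-1 = x n.-1 ^+ a0 ->
  ~ in_relations S x (omega n a x) /\
  exists r : ps, S r /\ r <> pzero k /\ in_relations S x (vscale r (omega n a x)).
Proof.
move=> n_gt1 hchar hrel.
have n_gt0 : (0 < n)%N by lia.
have hn1 : (n.-1 < n)%N by lia.
pose i0 := Ordinal n_gt0; pose i1 := Ordinal hn1.
have h01 : i0 != i1 by apply/eqP => /(congr1 val) /=; lia.
have -> : omega n a x = omega_pair i0 i1 a0 (a n.-1).
  apply: funext => i; rewrite /omega /omega_pair !pscaleE.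
  have -> : (val i == 0%N) = (i == i0) by [].
  have -> : (val i == n.-1) = (i == i1) by [].
  change (padd ?u ?v) with (u + v); change (popp ?u) with (- u); change (pzero k) with (0 : ps).
  by case: (i == i0); case: (i == i1); rewrite ?addr0 ?subr0 ?add0r ?sub0r ?oppr0.
split; first exact: omega_pair_not_relation.
exists (x i0 ^+ (a n.-1).-1); split; first exact: (SX HS _ (x_S (ltn_ord i0))).
split; first exact: vord_neq0 (vordX _ (proj2 (Hx (ltn_ord i0)))).
have a0_pos := a0_gt0 HS Hc c_gt0 HHK.
apply: omega_pair_torsion => //; apply: leq_trans a0_pos _.
exact: (HK_mono Hinc (leq0n _) hn1).
Qed.

End Generators.

Unset Implicit Arguments.

Theorem mainTheorem8 (k : closedFieldType)
  (char0 : [pchar k] =i pred0)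
  (S : ps k -> Prop)
  (HS : subalgebra S)
  (Hcond : exists c : nat, forall f : ps k, (forall i, (i < c)%N -> f i = 0) -> S f)
  (Hsing : exists f : ps k, ~ S f)
  (HC : ~ (forall f, conductor S f -> max_ideal2 S f))
  (n : nat) (a : nat -> nat)
  (Hinc : forall i j, (i < j)%N -> (j < n)%N -> (a i < a j)%N)
  (HHK : forall b, HKset S b <-> exists2 i, (i < n)%N & a i = b) :
  exists (u : ps k) (x : nat -> ps k),
    vord u 1 /\
    (forall i, (i < n)%N -> S (x i) /\ vord (x i) (a i)) /\
    (forall f, S f <-> exists F : mps k n, f = subst F x) /\
    x 0%N = ppow u (a 0%N) /\ x n.-1 = ppow u (a n.-1) /\
    ~ in_relations S x (omega n a x) /\
    (exists r : ps k, S r /\ r <> pzero k /\ in_relations S x (vscale r (omega n a x))).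
Proof.
have [c Hc] := Hcond.
have c_gt0 : (0 < c)%N.
  by rewrite lt0n; apply/eqP => c0; case: Hsing => f; apply; apply: Hc => i; rewrite c0.
have [y Hy] := HK_representatives HHK.
have [D [_ hDS [j hj hDj]]] := conductor_HK_bound HS Hc c_gt0 Hinc HHK Hy Hsing HC.
have n_gt1 := HK_length_gt1 HS Hc c_gt0 Hinc HHK Hsing hDS (ex_intro2 _ _ j hj hDj).
have [u [hu1 hu]] := uniformizer_root char0 (a0_gt0 HS Hc c_gt0 HHK) (proj2 (Hy 0%N (ltnW n_gt1))).
(* x_1 = y_1 = u^(a_1), and x_n = u^(a_n) lies in the part t^D k[[t]] of R *)
pose x i := if i == 0%N then u ^+ a 0%N else if i == n.-1 then u ^+ a n.-1 else y i.
have hn1 : (n.-1 == 0%N) = false by apply/eqP; lia.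
have Hx i : (i < n)%N -> S (x i) /\ vord (x i) (a i).
  rewrite /x; case: eqP => [-> hi|_ hi]; first by rewrite hu; exact: Hy.
  case: eqP => [->|_]; last exact: Hy.
  have hvu : vord (u ^+ a n.-1) (a n.-1) by rewrite -{2}[a n.-1]mul1n; exact: vordX.
  split=> //; apply: hDS; apply: tdvdW (vord_tdvd hvu).
  by apply: leq_trans hDj (HK_mono Hinc _ _); lia.
have hrel : x 0%N ^+ a n.-1 = x n.-1 ^+ a 0%N by rewrite /x eqxx hn1 eqxx -!exprM mulnC.
have [hnz htor] := omega_nonzero_torsion HS Hc c_gt0 Hinc HHK Hx n_gt1
  (natf_neq0_char0 char0 (ltn_addr _ (a0_gt0 HS Hc c_gt0 HHK))) hrel.
exists u, x; do 2!split=> //; split.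
  move=> f; split; first exact: (S_subst HS Hc c_gt0 Hinc HHK Hx).
  by move=> [F ->]; exact: (subst_S HS Hc c_gt0 Hinc HHK Hx).
by rewrite /x eqxx hn1 eqxx !ppowE.
Qed.
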